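(* Let $\ell$ be an odd prime and $N\ge1$. For integers $k\ge0$ and $0\le v<\ell^N$, $$\sum_{\substack{k'\ge0\\ k'\equiv v\ (\mathrm{mod}\ \ell^N)}}(-1)^{k'}\binom{\ell^N+2k-2}{k'}\equiv\begin{cases} v+1\pmod{\ell} & (k=0)\\ 0\pmod{\ell} & (k>0).\end{cases}$$
   Context: $\binom{m}{k'}=0$ for $k'>m$. *)

From mathcomp Require Import all_boot all_algebra.
Set Implicit Arguments. Unset Strict Implicit. Unset Printing Implicit Defensive.
Import GRing.Theory Num.Theory.
Local Open Scope ring_scope.

(* Since C(m, k') = 0 for k' > m, the sum is restricted to 0 <= k' <= m
   (m = l^N + 2k - 2), which is exactly the infinite sum. *)
Definition alternating_binom_sum (l N k v : nat) : int :=
  let m := (l ^ N + 2 * k - 2)%N in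
  \sum_(0 <= k' < m.+1 | (k' %% l ^ N == v)%N)
     (-1) ^+ k' * ('C(m, k'))%:Z.

(* Modulo l, the sum is the sum of the coefficients of (1 - X)^m, m = q + 2k - 2,
   in the degrees congruent to v modulo q = l^N.  In characteristic l we have
   (1 - X)^q = 1 - X^q, and such residue-class sums are invariant under
   multiplication by X^q.  Hence for k > 0 the factorisation
   (1 - X)^m = (1 - X^q) (1 - X)^(2k-2) makes the sum vanish.  For k = 0 the
   degree q - 2 is below q, so the sum is the single coefficient at v; dividing
   1 - X^q twice by 1 - X (partial summation of coefficients) shows that the
   coefficient of X^j in (1 - X)^(q-2) is j + 1 for j < q, which at j = q - 1 is
   q = 0 as required. *)

From mathcomp Require Import all_boot all_algebra.
Set Implicit Arguments.
Unset Strict Implicit.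
Unset Printing Implicit Defensive.

Import GRing.Theory Num.Theory.
Local Open Scope ring_scope.

Section CoefClassSum.
Variables (R : nzRingType) (q : nat).

Definition coef_class_sum (v : nat) (p : {poly R}) : R :=
  \sum_(0 <= j < size p | (j %% q == v)%N) p`_j.

Lemma coef_class_sumE v [n] [p : {poly R}] : (size p <= n)%N ->
  coef_class_sum v p = \sum_(0 <= j < n | (j %% q == v)%N) p`_j.
Proof.
move=> le_p_n; rewrite (big_cat_nat (leq0n _) le_p_n) //= [X in _ + X]big_nat_cond.
rewrite [X in _ + X]big1 ?addr0 // => j /andP[/andP[le_p_j _] _].
exact: nth_default.
Qed.

Lemma coef_class_sumB v (p r : {poly R}) :
  coef_class_sum v (p - r) = coef_class_sum v p - coef_class_sum v r.
Proof.
pose n := maxn (size p) (size r).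
have le_pr_n : (size (p - r)%R <= n)%N.
  by apply: leq_trans (size_polyD _ _) _; rewrite size_polyN.
rewrite (coef_class_sumE v le_pr_n).
rewrite (coef_class_sumE v (leq_maxl (size p) (size r))).
rewrite (coef_class_sumE v (leq_maxr (size p) (size r))) -sumrB.
by apply: eq_bigr => j _; rewrite coefB.
Qed.

Lemma coef_class_sum_small v (p : {poly R}) : (v < q)%N -> (size p <= q)%N ->
  coef_class_sum v p = p`_v.
Proof.
move=> lt_v_q le_p_q; rewrite (coef_class_sumE v le_p_q) big_mkcond.
rewrite (eq_big_nat _ _ (F2 := fun j => if j == v then p`_j else 0)).
  by rewrite -big_mkcond big_nat1_eq lt_v_q.
by move=> j /andP[_ lt_j_q]; rewrite modn_small.
Qed.

Hypothesis q_gt0 : (0 < q)%N.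

Lemma coef_class_sum_mulXn v (p : {poly R}) :
  coef_class_sum v ('X^q * p) = coef_class_sum v p.
Proof.
have le_Xp : (size ('X^q * p)%R <= q + size p)%N.
  by apply: leq_trans (size_polyMleq _ _) _; rewrite size_polyXn addSn.
rewrite (coef_class_sumE v le_Xp) (big_cat_nat (leq0n q) (leq_addr _ _)) /=.
rewrite [X in X + _]big_nat_cond big1 ?add0r; last first.
  by move=> j /andP[/andP[_ lt_j_q] _]; rewrite coefXnM lt_j_q.
rewrite -{1}[q]add0n big_addn addKn (coef_class_sumE v (leqnn _)).
by apply: eq_big => [j|j _]; rewrite ?modnDr // coefXnM addnK ltnNge leq_addl.
Qed.

Lemma coef_class_sum_mul1BXn v (p : {poly R}) :
  coef_class_sum v ((1 - 'X^q) * p) = 0.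
Proof. by rewrite mulrBl mul1r coef_class_sumB coef_class_sum_mulXn subrr. Qed.

End CoefClassSum.

Section OneMinusX.
Variable R : nzRingType.

Lemma coef_1BX_exp m j :
  ((1 - 'X : {poly R}) ^+ m)`_j = (-1) ^+ j * ('C(m, j))%:R.
Proof.
elim: m j => [|m IHm] [|j].
- by rewrite expr0 coef1 mulr1.
- by rewrite expr0 coef1 mulr0.
- by rewrite exprS mulrBl mul1r coefB coefXM IHm subr0 !bin0 !expr0.
rewrite exprS mulrBl mul1r coefB coefXM !IHm binS natrD exprS.
by rewrite /= !mulN1r mulrDr !mulNr.
Qed.

Lemma size_1BX_exp m : (size ((1 - 'X : {poly R}) ^+ m) <= m.+1)%N.
Proof.
have size_1BX : (size (1 - 'X : {poly R})%R <= 2)%N.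
  by rewrite (leq_trans (size_polyD _ _)) // size_polyN size_poly1 size_polyX.
apply: leq_trans (size_poly_exp_leq _ _) _.
by rewrite ltnS -[leqRHS]mul1n leq_mul2r -subn1 leq_subLR size_1BX orbT.
Qed.

Lemma coef_sum_mul1BX (p : {poly R}) j :
  p`_j = \sum_(i < j.+1) ((1 - 'X) * p)`_i.
Proof.
elim: j => [|j IHj]; first by rewrite big_ord1 mulrBl mul1r coefB coefXM subr0.
by rewrite big_ord_recr -IHj /= mulrBl mul1r coefB coefXM addrC subrK.
Qed.

End OneMinusX.

Section PrimeCharacteristic.
Variables (R : comNzRingType) (p : nat).
Hypothesis charRp : p \in [pchar R].

Lemma pchar_poly_nat_exp n : [pchar {poly R}].-nat (p ^ n)%N.
Proof.
by rewrite pnatX pnatE ?(pcharf_prime charRp) // pchar_poly charRp.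
Qed.

Lemma exp_1BX_pchar n : (1 - 'X : {poly R}) ^+ (p ^ n)%N = 1 - 'X^(p ^ n).
Proof.
have p_n := pchar_poly_nat_exp n.
by rewrite exprDn_pchar // exprNn_pchar // expr1n.
Qed.

Lemma coef_1BX_exp_pchar_pred2 n j : (0 < n)%N -> (j < p ^ n)%N ->
  ((1 - 'X : {poly R}) ^+ (p ^ n)%N.-2)`_j = j.+1%:R.
Proof.
move=> n_gt0 lt_j_q; set q := (p ^ n)%N in lt_j_q *.
have q_gt1 : (1 < q)%N.
  by rewrite -[X in (X < _)%N](expn0 p) ltn_exp2l ?prime_gt1 ?(pcharf_prime charRp).
have coef_pred1 i : (i < q)%N -> ((1 - 'X : {poly R}) ^+ q.-1)`_i = 1.
  move=> lt_i_q; rewrite coef_sum_mul1BX -exprS (prednK (ltnW q_gt1)) exp_1BX_pchar.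
  rewrite big_ord_recl big1 => [|i' _]; rewrite coefB coef1 coefXn.
    by rewrite (ltn_eqF (ltnW q_gt1)) subr0 addr0.
  by rewrite -/q /= ltn_eqF ?subrr // (leq_ltn_trans (ltn_ord i') lt_i_q).
rewrite coef_sum_mul1BX -exprS -subn2 -subSn // subn2 /=.
rewrite (eq_bigr (fun=> 1)) => [|i _]; first by rewrite sumr_const card_ord.
by rewrite coef_pred1 // (leq_trans (ltn_ord i) lt_j_q).
Qed.

End PrimeCharacteristic.

Lemma alternating_binom_sum_coef_class_sum (R : nzRingType) l N k v :
  (alternating_binom_sum l N k v)%:~R
  = coef_class_sum (l ^ N)%N v ((1 - 'X : {poly R}) ^+ (l ^ N + 2 * k - 2)%N).
Proof.
rewrite /alternating_binom_sum rmorph_sum (coef_class_sumE _ _ (size_1BX_exp _ _)).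
apply: eq_bigr => j _.
by rewrite coef_1BX_exp rmorphM rmorphXn rmorphN1 /= -pmulrn.
Qed.

Theorem mainTheorem12 (l N k v : nat) :
  prime l -> odd l -> (1 <= N)%N -> (v < l ^ N)%N ->
  (alternating_binom_sum l N k v ==
     (if k == 0%N then (v + 1)%:Z else 0) %[mod l%:Z])%Z.
Proof.
move=> l_prime _ N_gt0 lt_v_q; have charFl := pchar_Fp l_prime.
rewrite eqz_mod_dvd (dvdz_pcharf charFl) rmorphB /= subr_eq0; apply/eqP.
rewrite alternating_binom_sum_coef_class_sum; case: k => [|k] /=.
  rewrite muln0 addn0 subn2 -pmulrn addn1 coef_class_sum_small //.
    exact: coef_1BX_exp_pchar_pred2.
  apply: leq_trans (size_1BX_exp _ _) _.
  by case: (l ^ N)%N lt_v_q => [|[|q] _] //; apply: leqnSn.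
rewrite mulnS addnCA addKn exprD exp_1BX_pchar //.
by rewrite coef_class_sum_mul1BXn ?expn_gt0 ?prime_gt0 ?rmorph0.
Qed.
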